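(* The function $\Xi(b)=\cos^2b\int_b^{-b}\frac{d\varphi}{\cos\varphi\sqrt{\cos^4\varphi-\cos^4b}}$ is continuous and increasing on $(-\pi/2,0)$, and $\lim_{b\to0-}\Xi(b)=\frac{\sqrt2}{2}\pi$. *)

From Stdlib Require Import Reals.
Open Scope R_scope.

(* Improper Riemann integral over the open interval (a,b):
   f is Riemann integrable on every compact [c,d] with a < c <= d < b, and
   int_c^d f -> l as c -> a+ and d -> b-. *)
Definition improper_integral (f : R -> R) (a b l : R) : Prop :=
  (forall c d, a < c -> c <= d -> d < b -> exists _ : Riemann_integrable f c d, True) /\
  (forall eps, eps > 0 -> exists delta, delta > 0 /\
     forall c d (pr : Riemann_integrable f c d),
       a < c -> c < a + delta -> b - delta < d -> d < b -> c <= d ->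
       Rabs (RiemannInt pr - l) < eps).

Definition Xi_integrand (b : R) (phi : R) : R :=
  1 / (cos phi * sqrt (cos phi ^ 4 - cos b ^ 4)).

Definition in_domain (b : R) : Prop := - (PI / 2) < b < 0.

From Stdlib Require Import Reals Lra.
From Coquelicot Require Import Coquelicot.
Open Scope R_scope.

(* For b in (-pi/2, 0) put S = -tan b > 0 and substitute phi = atan (S sin t),
   t in (-pi/2, pi/2).  Since cos^2 phi = 1/(1 + S^2 sin^2 t) and
   cos^2 b = 1/(1 + S^2), a direct computation turns the integrand times
   dphi/dt into (1 + tan^2 b) * k(tan^2 b, t), where
     k(r, t) = sqrt ((1 + r sin^2 t) / (2 + r + r sin^2 t)).
   As cos^2 b * (1 + tan^2 b) = 1, this gives Xi(b) = F(tan^2 b) with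
     F(r) = int_{-pi/2}^{pi/2} k(r, t) dt,
   a proper integral of a continuous kernel with values in [0, 1].  Continuity,
   monotonicity (tan^2 decreases on (-pi/2, 0)) and the limit at 0 (F is
   continuous at tan^2 0 = 0) then follow from the properties of F. *)

Lemma sin_sq_bounds t : 0 <= sin t ^ 2 <= 1.
Proof. pose proof (sin2_cos2 t). unfold Rsqr in H. nra. Qed.

Lemma sin_sq_lt_1 t : - (PI / 2) < t < PI / 2 -> sin t ^ 2 < 1.
Proof.
  intros [H1 H2]. pose proof (cos_gt_0 t H1 H2). pose proof (sin2_cos2 t).
  unfold Rsqr in H0. nra.
Qed.

Definition ratio (r x : R) : R := (1 + r * x) / (2 + r + r * x).
Definition kernel (r t : R) : R := sqrt (ratio r (sin t ^ 2)).
Definition F (r : R) : R := RInt (kernel r) (- (PI / 2)) (PI / 2).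

Lemma ratio_pos r x : 0 <= r -> 0 <= x -> 0 < ratio r x.
Proof. intros. unfold ratio. apply Rdiv_lt_0_compat; nra. Qed.

Lemma ratio_le_1 r x : 0 <= r -> 0 <= x <= 1 -> ratio r x <= 1.
Proof. intros. unfold ratio. apply Rle_div_l; nra. Qed.

Lemma ratio_diff r1 r2 x : 0 <= r1 -> 0 <= r2 -> 0 <= x ->
  ratio r1 x - ratio r2 x =
  (r1 - r2) * ((x - 1) / ((2 + r1 + r1 * x) * (2 + r2 + r2 * x))).
Proof. intros. unfold ratio. field. split; nra. Qed.

(* For x in [0, 1] the ratio is 1-Lipschitz in r, since |x - 1| <= 1 <= denominator / 4. *)
Lemma ratio_lipschitz r1 r2 x : 0 <= r1 -> 0 <= r2 -> 0 <= x <= 1 ->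
  Rabs (ratio r1 x - ratio r2 x) <= Rabs (r1 - r2).
Proof.
  intros H1 H2 Hx. rewrite ratio_diff, Rabs_mult by lra.
  rewrite <- (Rmult_1_r (Rabs (r1 - r2))) at 2.
  apply Rmult_le_compat_l; [apply Rabs_pos|].
  assert (HD : 4 <= (2 + r1 + r1 * x) * (2 + r2 + r2 * x)).
  { assert (2 <= 2 + r1 + r1 * x) by nra. assert (2 <= 2 + r2 + r2 * x) by nra. nra. }
  unfold Rdiv. rewrite Rabs_mult, Rabs_inv, (Rabs_pos_eq (_ * _)) by lra.
  rewrite Rabs_left1 by lra.
  apply Rle_trans with (1 * / 4); [|lra].
  apply Rmult_le_compat; try lra.
  - left. apply Rinv_0_lt_compat. lra.
  - apply Rinv_le_contravar; lra.
Qed.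

Lemma ratio_strictly_decreasing r1 r2 x : 0 <= r2 -> r2 < r1 -> 0 <= x < 1 ->
  ratio r1 x < ratio r2 x.
Proof.
  intros H2 H12 Hx.
  enough (ratio r1 x - ratio r2 x < 0) by lra.
  rewrite ratio_diff by lra.
  apply Rmult_pos_neg; [lra|].
  unfold Rdiv. apply Rmult_neg_pos; [lra|].
  apply Rinv_0_lt_compat. apply Rmult_lt_0_compat; nra.
Qed.

Lemma sqrt_holder a b : 0 <= a -> 0 <= b ->
  Rabs (sqrt a - sqrt b) <= sqrt (Rabs (a - b)).
Proof.
  assert (Hle : forall x y, 0 <= y <= x -> sqrt x - sqrt y <= sqrt (x - y)).
  { intros x y Hy.
    pose proof (sqrt_le_1 y x ltac:(lra) ltac:(lra) ltac:(lra)).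
    pose proof (sqrt_sqrt x ltac:(lra)). pose proof (sqrt_sqrt y ltac:(lra)).
    pose proof (sqrt_pos y).
    rewrite <- (sqrt_pow2 (sqrt x - sqrt y)) by lra.
    apply sqrt_le_1; nra. }
  intros Ha Hb. destruct (Rle_dec b a) as [Hba|Hab].
  - pose proof (sqrt_le_1 b a Hb Ha Hba).
    rewrite !Rabs_pos_eq by lra. apply Hle. lra.
  - pose proof (sqrt_le_1 a b Ha Hb ltac:(lra)).
    rewrite Rabs_left1, (Rabs_left1 (a - b)) by lra.
    rewrite !Ropp_minus_distr. apply Hle. lra.
Qed.

Lemma kernel_continuous r t : 0 <= r -> continuous (kernel r) t.
Proof.
  intros Hr. apply (ex_derive_continuous (kernel r)). unfold kernel, ratio.
  auto_derive. pose proof (sin_sq_bounds t).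
  repeat split; try nra. apply Rmult_lt_0_compat; [nra|].
  apply Rinv_0_lt_compat. nra.
Qed.

Lemma kernel_bounds r t : 0 <= r -> 0 <= kernel r t <= 1.
Proof.
  intros Hr. pose proof (sin_sq_bounds t). unfold kernel. split; [apply sqrt_pos|].
  rewrite <- sqrt_1. apply sqrt_le_1; try lra.
  - left. apply ratio_pos; lra.
  - apply ratio_le_1; lra.
Qed.

Lemma kernel_integrable r a b : 0 <= r -> ex_RInt (kernel r) a b.
Proof.
  intros. apply (ex_RInt_continuous (V := R_CompleteNormedModule)).
  intros. apply kernel_continuous. lra.
Qed.

(* F is 1/2-Hoelder on [0, +oo): integrate the Hoelder bound of the kernel. *)
Lemma F_holder r1 r2 : 0 <= r1 -> 0 <= r2 ->
  Rabs (F r1 - F r2) <= PI * sqrt (Rabs (r1 - r2)).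
Proof.
  intros H1 H2. pose proof PI_RGT_0. unfold F.
  rewrite <- (RInt_minus (kernel r1) (kernel r2)) by (apply kernel_integrable; lra).
  replace (PI * _) with ((PI / 2 - - (PI / 2)) * sqrt (Rabs (r1 - r2))) by field.
  apply abs_RInt_le_const; [lra| |].
  - apply (ex_RInt_minus (kernel r1) (kernel r2)); apply kernel_integrable; lra.
  - intros t _. pose proof (sin_sq_bounds t). unfold kernel, minus, plus, opp; simpl.
    eapply Rle_trans; [apply sqrt_holder; left; apply ratio_pos; lra|].
    apply sqrt_le_1; try apply Rabs_pos. apply ratio_lipschitz; lra.
Qed.

(* F is strictly decreasing, as the kernel is pointwise strictly decreasing in r. *)
Lemma F_strictly_decreasing r1 r2 : 0 <= r2 -> r2 < r1 -> F r1 < F r2.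
Proof.
  intros H2 H12. pose proof PI_RGT_0. unfold F.
  apply RInt_lt; [lra| intros; apply kernel_continuous; lra
                     | intros; apply kernel_continuous; lra|].
  intros t Ht. pose proof (sin_sq_lt_1 t Ht). pose proof (sin_sq_bounds t).
  unfold kernel. apply sqrt_lt_1; try (left; apply ratio_pos; lra).
  apply ratio_strictly_decreasing; lra.
Qed.

(* At r = 0 the kernel is the constant 1 / sqrt 2. *)
Lemma F_0 : F 0 = sqrt 2 / 2 * PI.
Proof.
  unfold F. rewrite (RInt_ext _ (fun _ => sqrt 2 / 2)).
  - rewrite RInt_const. unfold scal; simpl. unfold mult; simpl. field.
  - intros t _. unfold kernel, ratio.
    replace ((1 + 0 * sin t ^ 2) / (2 + 0 + 0 * sin t ^ 2)) with (/ 2) by field.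
    rewrite sqrt_inv. pose proof (sqrt_sqrt 2 ltac:(lra)).
    pose proof (sqrt_lt_R0 2 ltac:(lra)).
    apply (Rmult_eq_reg_l (sqrt 2)); [field_simplify; lra | lra].
Qed.

Lemma tan_neg_on_domain b : in_domain b -> tan b < 0.
Proof.
  intros [H1 H2]. rewrite <- tan_0. pose proof PI_RGT_0. apply tan_increasing; lra.
Qed.

Lemma cos_pos_on_domain b : in_domain b -> 0 < cos b.
Proof. intros [H1 H2]. pose proof PI_RGT_0. apply cos_gt_0; lra. Qed.

Lemma cos_sq_mul_sec_sq b : cos b <> 0 -> cos b ^ 2 * (1 + tan b ^ 2) = 1.
Proof.
  intros. pose proof (sin2_cos2 b). unfold Rsqr in H0. unfold tan. field_simplify; lra.
Qed.

(* On (b, -b) the integrand has positive radicand, hence is continuous. *)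
Lemma cos_gt_cos_endpoint b phi : in_domain b -> b < phi < - b -> cos b < cos phi.
Proof.
  intros [H1 H2] [H3 H4]. pose proof PI_RGT_0.
  rewrite <- (cos_neg b). destruct (Rle_dec 0 phi).
  - apply cos_decreasing_1; lra.
  - rewrite <- (cos_neg phi). apply cos_decreasing_1; lra.
Qed.

Lemma integrand_continuous b phi : in_domain b -> b < phi < - b ->
  continuous (Xi_integrand b) phi.
Proof.
  intros Hb Hphi. pose proof (cos_gt_cos_endpoint b phi Hb Hphi).
  pose proof (cos_pos_on_domain b Hb).
  assert (Hsq : cos b * cos b < cos phi * cos phi) by nra.
  apply (ex_derive_continuous (Xi_integrand b)). unfold Xi_integrand. auto_derive.
  assert (Hd : 0 < cos phi * (cos phi * (cos phi * (cos phi * 1))) +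
               - (cos b * (cos b * (cos b * (cos b * 1))))) by nra.
  repeat split; auto.
  apply Rmult_integral_contrapositive. split; [lra|].
  apply Rgt_not_eq, sqrt_lt_R0. exact Hd.
Qed.

Lemma integrand_sq b phi : 0 < cos phi -> cos b ^ 4 < cos phi ^ 4 ->
  0 < Xi_integrand b phi /\
  Xi_integrand b phi ^ 2 = 1 / (cos phi ^ 2 * (cos phi ^ 4 - cos b ^ 4)).
Proof.
  intros Hc Hd. unfold Xi_integrand.
  pose proof (sqrt_lt_R0 (cos phi ^ 4 - cos b ^ 4) ltac:(lra)) as Hs.
  pose proof (sqrt_sqrt (cos phi ^ 4 - cos b ^ 4) ltac:(lra)) as Hss.
  split.
  - apply Rdiv_lt_0_compat; [lra|]. apply Rmult_lt_0_compat; lra.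
  - replace (cos phi ^ 4 - cos b ^ 4) with
      (sqrt (cos phi ^ 4 - cos b ^ 4) * sqrt (cos phi ^ 4 - cos b ^ 4)) at 2 by exact Hss.
    field. lra.
Qed.

Lemma cos_atan_pos y : 0 < cos (atan y).
Proof.
  rewrite cos_atan. apply Rdiv_lt_0_compat; [lra|]. apply sqrt_lt_R0.
  unfold Rsqr. nra.
Qed.

Lemma cos_atan_sq y : cos (atan y) ^ 2 = 1 / (1 + y ^ 2).
Proof.
  rewrite cos_atan. unfold Rsqr. pose proof (sqrt_lt_R0 (1 + y * y) ltac:(nra)).
  unfold Rdiv. rewrite !Rmult_1_l, pow_inv, <- Rsqr_pow2, Rsqr_sqrt by nra.
  f_equal. ring.
Qed.

Lemma integrand_at_atan b S y : cos b ^ 2 = 1 / (1 + S ^ 2) -> y ^ 2 < S ^ 2 ->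
  0 < Xi_integrand b (atan y) /\
  Xi_integrand b (atan y) ^ 2 =
  (1 + y ^ 2) ^ 3 * (1 + S ^ 2) ^ 2 / ((S ^ 2 - y ^ 2) * (2 + S ^ 2 + y ^ 2)).
Proof.
  intros Hcb Hy. pose proof (pow2_ge_0 y).
  assert (Hfourth : forall x, x ^ 4 = (x ^ 2) ^ 2) by (intros; ring).
  assert (Hlt : cos b ^ 4 < cos (atan y) ^ 4).
  { rewrite !Hfourth, Hcb, cos_atan_sq.
    assert (1 / (1 + S ^ 2) < 1 / (1 + y ^ 2)).
    { apply Rmult_lt_reg_r with ((1 + S ^ 2) * (1 + y ^ 2)); [nra|].
      field_simplify; nra. }
    assert (0 < 1 / (1 + S ^ 2)) by (apply Rdiv_lt_0_compat; nra). nra. }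
  destruct (integrand_sq b (atan y) (cos_atan_pos y) Hlt) as [Hpos Hsq].
  split; [exact Hpos|]. rewrite Hsq, !Hfourth, Hcb, cos_atan_sq.
  field. repeat split; nra.
Qed.

Definition subst (S t : R) : R := atan (S * sin t).
Definition subst_deriv (S t : R) : R := / (1 + (S * sin t) ^ 2) * (S * cos t).

Lemma subst_is_derive S t : is_derive (subst S) t (subst_deriv S t).
Proof.
  assert (Hin : is_derive (fun t => S * sin t) t (S * cos t)) by (auto_derive; auto; ring).
  pose proof (is_derive_comp atan (fun t => S * sin t) t _ _
     (proj2 (is_derive_Reals _ _ _) (derivable_pt_lim_atan _)) Hin) as H.
  unfold subst, subst_deriv. unfold scal in H; simpl in H; unfold mult in H; simpl in H.
  rewrite Rmult_comm. exact H.
Qed.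

Lemma subst_deriv_continuous S t : continuous (subst_deriv S) t.
Proof.
  apply (ex_derive_continuous (subst_deriv S)). unfold subst_deriv. auto_derive. nra.
Qed.

(* Key identity: the substituted integrand is (1 + tan^2 b) times the reduced kernel.
   Both sides are positive, and their squares agree by integrand_at_atan. *)
Lemma substitution_identity b t : in_domain b -> - (PI / 2) < t < PI / 2 ->
  subst_deriv (- tan b) t * Xi_integrand b (subst (- tan b) t) =
  (1 + tan b ^ 2) * kernel (tan b ^ 2) t.
Proof.
  intros Hb Ht.
  pose proof (cos_pos_on_domain b Hb) as Hcos.
  assert (Hcb : cos b ^ 2 = 1 / (1 + tan b ^ 2)).
  { apply (Rmult_eq_reg_r (1 + tan b ^ 2)); [|nra].
    rewrite cos_sq_mul_sec_sq by lra. field. nra. }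
  pose proof (sin_sq_lt_1 t Ht). pose proof (sin_sq_bounds t).
  pose proof (cos_gt_0 t (proj1 Ht) (proj2 Ht)) as Hct.
  pose proof (sin2_cos2 t) as Hsc. unfold Rsqr in Hsc.
  assert (HS : tan b ^ 2 = (- tan b) ^ 2) by ring.
  assert (HSpos : 0 < - tan b) by (pose proof (tan_neg_on_domain b Hb); lra).
  rewrite HS in *. set (S := - tan b) in *. clearbody S.
  assert (HS2 : 0 < S ^ 2) by (apply pow_lt; lra).
  assert (Hy : (S * sin t) ^ 2 < S ^ 2) by (rewrite Rpow_mult_distr; nra).
  destruct (integrand_at_atan b S (S * sin t) Hcb Hy) as [Hpos Hsq].
  unfold subst, kernel.
  pose proof (ratio_pos (S ^ 2) (sin t ^ 2) ltac:(lra) ltac:(lra)) as Hr.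
  apply Rsqr_inj.
  - apply Rmult_le_pos; [|lra]. unfold subst_deriv.
    apply Rmult_le_pos; [left; apply Rinv_0_lt_compat; nra | nra].
  - apply Rmult_le_pos; [nra | apply sqrt_pos].
  - rewrite !Rsqr_mult, Rsqr_sqrt, !Rsqr_pow2, Hsq by lra.
    unfold subst_deriv, ratio. rewrite !Rpow_mult_distr.
    replace (cos t ^ 2) with (1 - sin t ^ 2) by nra.
    field. repeat split; nra.
Qed.

Definition subst_inv (b c : R) : R := asin (tan c / - tan b).

Lemma tan_ratio_range b c : in_domain b -> b < c < - b -> -1 < tan c / - tan b < 1.
Proof.
  intros Hb Hc. pose proof (tan_neg_on_domain b Hb). destruct Hb as [H1 H2].
  pose proof PI_RGT_0.
  assert (Hlo : tan b < tan c) by (apply tan_increasing; lra).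
  assert (Hhi : tan c < tan (- b)) by (apply tan_increasing; lra).
  rewrite tan_neg in Hhi.
  split; [apply Rlt_div_r | apply Rlt_div_l]; lra.
Qed.

Lemma subst_inv_range b c : in_domain b -> b < c < - b ->
  - (PI / 2) < subst_inv b c < PI / 2.
Proof. intros. apply asin_bound_lt, tan_ratio_range; auto. Qed.

Lemma subst_subst_inv b c : in_domain b -> b < c < - b ->
  subst (- tan b) (subst_inv b c) = c.
Proof.
  intros Hb Hc. pose proof (tan_ratio_range b c Hb Hc). pose proof (tan_neg_on_domain b Hb).
  unfold subst, subst_inv. rewrite sin_asin by lra.
  replace (- tan b * (tan c / - tan b)) with (tan c) by (field; lra).
  apply atan_tan. destruct Hb. pose proof PI_RGT_0. lra.
Qed.

Lemma subst_range b t : in_domain b -> - (PI / 2) < t < PI / 2 ->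
  b < subst (- tan b) t < - b.
Proof.
  intros Hb Ht. pose proof (tan_neg_on_domain b Hb). pose proof (sin_sq_lt_1 t Ht).
  assert (Hsin : -1 < sin t < 1) by nra.
  destruct Hb as [Hb1 Hb2]. pose proof PI_RGT_0.
  rewrite <- (atan_tan b) at 1 by lra. rewrite <- (atan_tan (- b)) by lra.
  rewrite tan_neg. unfold subst. split; apply atan_increasing; nra.
Qed.

Lemma RInt_integrand_substitution b c d : in_domain b -> b < c -> c <= d -> d < - b ->
  RInt (Xi_integrand b) c d =
  (1 + tan b ^ 2) * RInt (kernel (tan b ^ 2)) (subst_inv b c) (subst_inv b d).
Proof.
  intros Hb Hbc Hcd Hdb.
  pose proof (subst_inv_range b c Hb ltac:(lra)) as Hc.
  pose proof (subst_inv_range b d Hb ltac:(lra)) as Hd.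
  assert (Hin : forall x, Rmin (subst_inv b c) (subst_inv b d) <= x
                          <= Rmax (subst_inv b c) (subst_inv b d) -> - (PI / 2) < x < PI / 2).
  { intros x Hx. pose proof (Rmin_glb_lt _ _ (- (PI / 2)) (proj1 Hc) (proj1 Hd)).
    pose proof (Rmax_lub_lt _ _ (PI / 2) (proj2 Hc) (proj2 Hd)). lra. }
  assert (E := RInt_comp (Xi_integrand b) (subst (- tan b)) (subst_deriv (- tan b))
                         (subst_inv b c) (subst_inv b d)).
  rewrite (subst_subst_inv b c), (subst_subst_inv b d) in E by (auto; lra).
  rewrite <- E.
  - transitivity (RInt (fun x => scal (1 + tan b ^ 2) (kernel (tan b ^ 2) x))
                         (subst_inv b c) (subst_inv b d)).
    + apply RInt_ext. intros x Hx.
      exact (substitution_identity b x Hb (Hin x ltac:(lra))).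
    + exact (RInt_scal _ _ _ (1 + tan b ^ 2) (kernel_integrable _ _ _ (pow2_ge_0 _))).
  - intros x Hx. apply integrand_continuous; auto. apply subst_range; auto.
  - intros x _. split; [apply subst_is_derive | apply subst_deriv_continuous].
Qed.

Lemma asin_le_compat y1 y2 : -1 <= y1 <= 1 -> -1 <= y2 <= 1 -> y1 <= y2 ->
  asin y1 <= asin y2.
Proof.
  intros H1 H2 H12. pose proof (asin_bound y1). pose proof (asin_bound y2).
  destruct (Rle_dec (asin y1) (asin y2)) as [|Hn]; auto.
  assert (sin (asin y2) < sin (asin y1)) by (apply sin_increasing_1; lra).
  rewrite !sin_asin in * by auto. lra.
Qed.

Lemma subst_inv_le_compat b c d : in_domain b -> b < c -> c <= d -> d < - b ->
  subst_inv b c <= subst_inv b d.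
Proof.
  intros Hb Hbc Hcd Hdb.
  pose proof (tan_ratio_range b c Hb ltac:(lra)). pose proof (tan_ratio_range b d Hb ltac:(lra)).
  pose proof (tan_neg_on_domain b Hb).
  unfold subst_inv. apply asin_le_compat; try lra.
  unfold Rdiv. apply Rmult_le_compat_r; [left; apply Rinv_0_lt_compat; lra|].
  destruct (Rle_lt_or_eq_dec c d Hcd) as [Hlt|Heq].
  - destruct Hb. left. apply tan_increasing; lra.
  - right. rewrite Heq. reflexivity.
Qed.

(* Epsilon-delta form of continuity_pt, without the x <> x0 restriction. *)
Lemma continuity_pt_eps f x0 : continuity_pt f x0 ->
  forall eps, 0 < eps -> exists delta, 0 < delta /\
    forall x, Rabs (x - x0) < delta -> Rabs (f x - f x0) < eps.
Proof.
  intros Hf eps He.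
  destruct (Hf eps He) as [delta [Hd Hdelta]]. simpl in Hdelta. unfold R_dist in Hdelta.
  exists delta. split; auto. intros x Hx.
  destruct (Req_dec x x0) as [->|Hne].
  - rewrite Rminus_diag, Rabs_R0. auto.
  - apply Hdelta. repeat split; auto.
Qed.

Lemma tan_continuous_pt x : cos x <> 0 -> continuity_pt tan x.
Proof.
  intros Hc. apply continuity_pt_filterlim.
  apply (ex_derive_continuous tan). unfold tan. auto_derive. auto.
Qed.

Lemma subst_inv_left_tail b t0 : in_domain b -> - (PI / 2) < t0 <= PI / 2 ->
  exists delta, 0 < delta /\
    forall c, b < c < b + delta -> c < - b -> subst_inv b c <= t0.
Proof.
  intros Hb Ht0. pose proof (tan_neg_on_domain b Hb) as Htb. pose proof PI_RGT_0.
  assert (Hsin : -1 < sin t0).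
  { assert (sin (- (PI / 2)) < sin t0) by (apply sin_increasing_1; lra).
    rewrite sin_neg, sin_PI2 in *. lra. }
  assert (Hcb : cos b <> 0) by (pose proof (cos_pos_on_domain b Hb); lra).
  destruct (continuity_pt_eps tan b (tan_continuous_pt b Hcb) (- tan b * (sin t0 + 1)))
    as [delta [Hd Hdelta]]; [nra|].
  exists delta. split; auto. intros c Hc Hcb'.
  pose proof (tan_ratio_range b c Hb ltac:(lra)).
  unfold subst_inv. rewrite <- (asin_sin t0) by lra.
  apply asin_le_compat; [lra | pose proof (SIN_bound t0); lra |].
  assert (Habs : Rabs (tan c - tan b) < - tan b * (sin t0 + 1))
    by (apply Hdelta; rewrite Rabs_pos_eq; lra).
  apply Rabs_def2 in Habs. apply Rle_div_l; lra.
Qed.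

Lemma subst_inv_right_tail b t1 : in_domain b -> - (PI / 2) <= t1 < PI / 2 ->
  exists delta, 0 < delta /\
    forall d, - b - delta < d < - b -> b < d -> t1 <= subst_inv b d.
Proof.
  intros Hb Ht1.
  destruct (subst_inv_left_tail b (- t1) Hb ltac:(lra)) as [delta [Hd Hdelta]].
  exists delta. split; auto. intros d Hd1 Hd2.
  assert (Hodd : subst_inv b (- d) = - subst_inv b d).
  { unfold subst_inv. rewrite tan_neg, <- asin_opp. f_equal. unfold Rdiv. ring. }
  assert (subst_inv b (- d) <= - t1) by (apply Hdelta; lra). lra.
Qed.

(* Truncating F to [u, v] costs at most the removed length, as 0 <= k <= 1. *)
Lemma F_minus_partial r u v : 0 <= r -> - (PI / 2) <= u <= v -> v <= PI / 2 ->
  Rabs (F r - RInt (kernel r) u v) <= (u + PI / 2) + (PI / 2 - v).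
Proof.
  intros Hr Hu Hv. unfold F.
  assert (Hk : forall a b, ex_RInt (kernel r) a b) by (intros; apply kernel_integrable, Hr).
  assert (Hle1 : forall a b, a <= b -> Rabs (RInt (kernel r) a b) <= b - a).
  { intros a b Hab. rewrite <- (Rmult_1_r (b - a)). apply abs_RInt_le_const; auto.
    intros t _. pose proof (kernel_bounds r t Hr). rewrite Rabs_pos_eq; lra. }
  rewrite <- (RInt_Chasles (kernel r) (- (PI / 2)) u (PI / 2)), 
          <- (RInt_Chasles (kernel r) u v (PI / 2)) by auto.
  unfold plus; simpl.
  replace (_ - _) with (RInt (kernel r) (- (PI / 2)) u + RInt (kernel r) v (PI / 2)) by ring.
  eapply Rle_trans; [apply Rabs_triang|].
  pose proof (Hle1 (- (PI / 2)) u ltac:(lra)). pose proof (Hle1 v (PI / 2) ltac:(lra)). lra.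
Qed.

Lemma improper_integral_closed_form b : in_domain b ->
  improper_integral (Xi_integrand b) b (- b) ((1 + tan b ^ 2) * F (tan b ^ 2)).
Proof.
  intros Hb. pose proof PI_RGT_0. split.
  - intros c d Hc Hcd Hd.
    exists (@continuity_implies_RiemannInt _ _ _ Hcd (fun x Hx =>
      proj2 (continuity_pt_filterlim _ _) (integrand_continuous b x Hb ltac:(lra)))).
    exact I.
  - intros eps He.
    set (K := 1 + tan b ^ 2). assert (HK : 0 < K) by (unfold K; nra).
    set (e := Rmin (eps / (4 * K)) (PI / 2)).
    assert (He0 : 0 < e) by (apply Rmin_glb_lt; [apply Rdiv_lt_0_compat|]; lra).
    assert (He1 : e <= eps / (4 * K)) by apply Rmin_l.
    assert (He2 : e <= PI / 2) by apply Rmin_r.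
    destruct (subst_inv_left_tail b (- (PI / 2) + e) Hb ltac:(lra)) as [d1 [Hd1 Hleft]].
    destruct (subst_inv_right_tail b (PI / 2 - e) Hb ltac:(lra)) as [d2 [Hd2 Hright]].
    exists (Rmin d1 d2). split; [apply Rmin_glb_lt; auto|].
    intros c d pr Hc1 Hc2 Hd1' Hd2' Hcd.
    pose proof (Rmin_l d1 d2). pose proof (Rmin_r d1 d2).
    pose proof (Hleft c ltac:(lra) ltac:(lra)). pose proof (Hright d ltac:(lra) ltac:(lra)).
    pose proof (subst_inv_range b c Hb ltac:(lra)).
    pose proof (subst_inv_range b d Hb ltac:(lra)).
    pose proof (subst_inv_le_compat b c d Hb ltac:(lra) Hcd ltac:(lra)).
    rewrite <- RInt_Reals, RInt_integrand_substitution by (auto; lra). fold K.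
    rewrite <- Rmult_minus_distr_l, Rabs_mult, (Rabs_pos_eq K) by lra.
    rewrite <- Rabs_Ropp, Ropp_minus_distr.
    pose proof (F_minus_partial (tan b ^ 2) (subst_inv b c) (subst_inv b d)
                  (pow2_ge_0 _) ltac:(lra) ltac:(lra)).
    assert (K * (2 * e) <= eps / 2).
    { replace (eps / 2) with (K * (2 * (eps / (4 * K)))) by (field; lra).
      apply Rmult_le_compat_l; lra. }
    apply Rle_lt_trans with (K * (2 * e)); [|lra].
    apply Rmult_le_compat_l; lra.
Qed.

Definition Xi_closed (b : R) : R := F (tan b ^ 2).

Lemma continuity_pt_limit1_in f D x0 : continuity_pt f x0 -> limit1_in f D (f x0) x0.
Proof.
  intros Hf eps He. destruct (continuity_pt_eps f x0 Hf eps He) as [delta [Hd Hdelta]].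
  exists delta. split; auto. intros x [_ Hx]. apply Hdelta, Hx.
Qed.

Lemma tan_sq_continuous_pt x : cos x <> 0 -> continuity_pt (fun x => tan x ^ 2) x.
Proof.
  intros Hc. apply continuity_pt_filterlim.
  apply (ex_derive_continuous (fun x => tan x ^ 2)). unfold tan. auto_derive. auto.
Qed.

Lemma Xi_closed_continuous b : cos b <> 0 -> continuity_pt Xi_closed b.
Proof.
  intros Hc eps He. pose proof PI_RGT_0.
  destruct (continuity_pt_eps _ b (tan_sq_continuous_pt b Hc) ((eps / PI) ^ 2))
    as [delta [Hd Hdelta]]; [apply pow_lt, Rdiv_lt_0_compat; lra|].
  exists delta. split; auto. intros x [_ Hx].
  change (Rabs (Xi_closed x - Xi_closed b) < eps).
  unfold Xi_closed. eapply Rle_lt_trans; [apply F_holder; apply pow2_ge_0|].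
  assert (Hsq : sqrt (Rabs (tan x ^ 2 - tan b ^ 2)) < eps / PI).
  { rewrite <- (sqrt_pow2 (eps / PI)) by (left; apply Rdiv_lt_0_compat; lra).
    apply sqrt_lt_1; [apply Rabs_pos | apply pow2_ge_0 | apply Hdelta, Hx]. }
  apply (Rmult_lt_compat_l PI) in Hsq; auto.
  replace (PI * (eps / PI)) with eps in Hsq by (field; lra). exact Hsq.
Qed.

(* Monotonicity: tan^2 decreases on (-pi/2, 0) and F decreases. *)
Lemma Xi_closed_increasing b1 b2 : in_domain b1 -> in_domain b2 -> b1 < b2 ->
  Xi_closed b1 < Xi_closed b2.
Proof.
  intros H1 H2 H12. unfold Xi_closed. pose proof (tan_neg_on_domain b2 H2).
  assert (tan b1 < tan b2) by (destruct H1, H2; apply tan_increasing; lra).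
  apply F_strictly_decreasing; nra.
Qed.

Theorem proposition5 :
  exists Xi : R -> R,
    (forall b, in_domain b ->
       exists I, improper_integral (Xi_integrand b) b (- b) I /\
                 Xi b = cos b ^ 2 * I) /\
    (forall b, in_domain b -> continuity_pt Xi b) /\
    (forall b1 b2, in_domain b1 -> in_domain b2 -> b1 < b2 -> Xi b1 < Xi b2) /\
    limit1_in Xi in_domain (sqrt 2 / 2 * PI) 0.
Proof.
  exists Xi_closed. split; [|split; [|split]].
  - intros b Hb. exists ((1 + tan b ^ 2) * F (tan b ^ 2)). split.
    + apply improper_integral_closed_form, Hb.
    + pose proof (cos_pos_on_domain b Hb).
      rewrite <- Rmult_assoc, cos_sq_mul_sec_sq, Rmult_1_l by lra. reflexivity.
  - intros b Hb. pose proof (cos_pos_on_domain b Hb). apply Xi_closed_continuous. lra.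
  - exact Xi_closed_increasing.
  - replace (sqrt 2 / 2 * PI) with (Xi_closed 0)
      by (unfold Xi_closed; rewrite tan_0, pow_ne_zero, F_0 by discriminate; reflexivity).
    apply continuity_pt_limit1_in, Xi_closed_continuous. rewrite cos_0. lra.
Qed.
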